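(* A maximal ideal $M$ of $B_1(\mathbb{R})$ is real if and only if it is fixed, i.e. if and only if $M=\{f\in B_1(\mathbb{R}): f(p)=0\}$ for some $p\in\mathbb{R}$.
   Context: $B_1(\mathbb{R})$ denotes the ring (pointwise operations and order) of Baire one functions $\mathbb{R}\to\mathbb{R}$, i.e. pointwise limits of sequences of continuous functions. For $f$, $Z(f)=\{x: f(x)=0\}$. A proper ideal $I$ is fixed if $\bigcap_{f\in I}Z(f)\neq\emptyset$. For a maximal ideal $M$, $M(f)=f+M$, and $\Phi:\mathbb{R}\to B_1(\mathbb{R})/M$, $\Phi(r)=M(\mathbf r)$ ($\mathbf r$ the constant function $r$); $M$ is real if $\Phi$ is surjective. *)

From Stdlib Require Import Reals.
Open Scope R_scope.

Definition Baire1 (f : R -> R) : Prop :=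
  exists g : nat -> R -> R,
    (forall n, continuity (g n)) /\ (forall x, Un_cv (fun n => g n x) (f x)).

Definition is_ideal (I : (R -> R) -> Prop) : Prop :=
  (forall f, I f -> Baire1 f) /\
  I (fun _ => 0) /\
  (forall f g, I f -> I g -> I (fun x => f x + g x)) /\
  (forall f g, I f -> Baire1 g -> I (fun x => g x * f x)).

Definition is_proper (I : (R -> R) -> Prop) : Prop :=
  exists f, Baire1 f /\ ~ I f.

Definition is_maximal_ideal (M : (R -> R) -> Prop) : Prop :=
  is_ideal M /\ is_proper M /\
  forall J, is_ideal J -> is_proper J -> (forall f, M f -> J f) ->
            forall f, J f -> M f.

Definition Z (f : R -> R) (x : R) : Prop := f x = 0.

Definition is_fixed (I : (R -> R) -> Prop) : Prop :=
  exists p, forall f, I f -> Z f p.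

(* M real iff Phi : r |-> M(r) is surjective onto B_1(R)/M, i.e. every
   f in B_1(R) is congruent mod M to a constant. *)
Definition is_real_ideal (M : (R -> R) -> Prop) : Prop :=
  forall f, Baire1 f -> exists r : R, M (fun x => f x - r).

(* A maximal ideal fixed at p is the ideal of Baire one functions vanishing at p,
   and then f is congruent to the constant f p. Conversely, if the identity is
   congruent to a constant r and some g in M has g r <> 0, then
   (x - r)^2 + g^2 lies in M and vanishes nowhere; its reciprocal is again Baire one,
   so M contains 1 and is not proper. *)
From Stdlib Require Import Reals Lra FunctionalExtensionality.
Open Scope R_scope.

Lemma Un_cv_const (c : R) : Un_cv (fun _ => c) c.
Proof.
  intros e He; exists 0%nat; intros n _.
  unfold Rdist; rewrite Rminus_diag, Rabs_R0; lra.
Qed.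

Lemma Un_cv_ext (u v : nat -> R) (l : R) :
  (forall n, u n = v n) -> Un_cv u l -> Un_cv v l.
Proof.
  intros Huv Hu e He; destruct (Hu e He) as [N HN].
  exists N; intros n Hn; rewrite <- Huv; auto.
Qed.

Lemma Baire1_continuous (f : R -> R) : continuity f -> Baire1 f.
Proof. intros Hf; exists (fun _ => f); split; auto; intros x; apply Un_cv_const. Qed.

Lemma Baire1_const (c : R) : Baire1 (fun _ => c).
Proof. apply Baire1_continuous, continuity_const; intros ? ?; reflexivity. Qed.

Lemma Baire1_plus (f g : R -> R) :
  Baire1 f -> Baire1 g -> Baire1 (fun x => f x + g x).
Proof.
  intros [a [Ha Ha']] [b [Hb Hb']]; exists (fun n x => a n x + b n x); split.
  - intros n; exact (continuity_plus _ _ (Ha n) (Hb n)).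
  - intros x; apply CV_plus; auto.
Qed.

Lemma Baire1_minus (f g : R -> R) :
  Baire1 f -> Baire1 g -> Baire1 (fun x => f x - g x).
Proof.
  intros [a [Ha Ha']] [b [Hb Hb']]; exists (fun n x => a n x - b n x); split.
  - intros n; exact (continuity_minus _ _ (Ha n) (Hb n)).
  - intros x; apply CV_minus; auto.
Qed.

Lemma Baire1_mult (f g : R -> R) :
  Baire1 f -> Baire1 g -> Baire1 (fun x => f x * g x).
Proof.
  intros [a [Ha Ha']] [b [Hb Hb']]; exists (fun n x => a n x * b n x); split.
  - intros n; exact (continuity_mult _ _ (Ha n) (Hb n)).
  - intros x; apply CV_mult; auto.
Qed.

(* If g_n -> h, the continuous functions g_n / (g_n^2 + 2^-n) converge to 1/h
   wherever h does not vanish. *)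
Lemma Baire1_inv (h : R -> R) :
  Baire1 h -> (forall x, h x <> 0) -> Baire1 (fun x => / h x).
Proof.
  intros [g [Hg Hg']] Hnz.
  exists (fun n x => g n x * / (g n x * g n x + / pow_2_n n)); split.
  - intros n.
    assert (Heps : 0 < / pow_2_n n)
      by (apply Rinv_0_lt_compat; unfold pow_2_n; apply pow_lt; lra).
    change (continuity (g n * / (g n * g n + fct_cte (/ pow_2_n n)))%F).
    apply continuity_mult; [apply Hg|].
    apply continuity_inv.
    + apply continuity_plus; [apply continuity_mult; apply Hg|].
      apply continuity_const; intros ? ?; reflexivity.
    + intros x; unfold plus_fct, mult_fct, fct_cte.
      pose proof (Rle_0_sqr (g n x)); unfold Rsqr in *; lra.
  - intros x.
    assert (Hden : Un_cv (fun n => g n x * g n x + / pow_2_n n) (h x * h x + 0))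
      by (apply CV_plus; [apply CV_mult; apply Hg'|apply cv_infty_cv_0, pow_2_n_infty]).
    assert (Hden_nz : h x * h x + 0 <> 0)
      by (specialize (Hnz x); rewrite Rplus_0_r; apply Rmult_integral_contrapositive; tauto).
    assert (Hinv := continuity_seq (/ (fun y => y))%F _ _
      (continuity_pt_inv (fun y => y) _ (derivable_continuous_pt _ _ (derivable_pt_id _)) Hden_nz) Hden).
    replace (/ h x) with (h x * / (h x * h x + 0)) by (field; apply Hnz).
    exact (Un_cv_ext _ _ _ (fun n => eq_refl) (CV_mult _ _ _ _ (Hg' x) Hinv)).
Qed.

Lemma ideal_nonvanishing_not_proper (I : (R -> R) -> Prop) (h : R -> R) :
  is_ideal I -> I h -> (forall x, h x <> 0) -> ~ is_proper I.
Proof.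
  intros [HB [_ [_ Hmul]]] Ih Hnz [f [Hf Hnf]]; apply Hnf.
  replace f with (fun x => (f x * / h x) * h x).
  - apply Hmul; [exact Ih|].
    apply Baire1_mult; [exact Hf|exact (Baire1_inv h (HB h Ih) Hnz)].
  - apply functional_extensionality; intros x; field; apply Hnz.
Qed.

Definition point_ideal (p : R) (f : R -> R) : Prop := Baire1 f /\ f p = 0.

Lemma point_ideal_is_ideal (p : R) : is_ideal (point_ideal p).
Proof.
  split; [|split; [|split]].
  - intros f [Hf _]; exact Hf.
  - split; [apply Baire1_const|reflexivity].
  - intros f g [Hf Hfp] [Hg Hgp]; split; [apply Baire1_plus; auto|rewrite Hfp, Hgp; ring].
  - intros f g [Hf Hfp] Hg; split; [apply Baire1_mult; auto|rewrite Hfp; ring].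
Qed.

Lemma point_ideal_is_proper (p : R) : is_proper (point_ideal p).
Proof.
  exists (fun _ => 1); split; [apply Baire1_const|].
  intros [_ H]; lra.
Qed.

Lemma maximal_ideal_fixed_at (M : (R -> R) -> Prop) (p : R) :
  is_maximal_ideal M -> (forall f, M f -> f p = 0) ->
  forall f, M f <-> point_ideal p f.
Proof.
  intros [[HB _] [_ Hmax]] Hp.
  assert (HMp : forall f, M f -> point_ideal p f) by (intros f Hf; split; auto).
  intros f; split; [apply HMp|].
  exact (Hmax _ (point_ideal_is_ideal p) (point_ideal_is_proper p) HMp f).
Qed.

Lemma point_ideal_is_real (p : R) : is_real_ideal (point_ideal p).
Proof.
  intros f Hf; exists (f p); split; [|ring].
  apply Baire1_minus; [exact Hf|apply Baire1_const].
Qed.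

Lemma real_ideal_is_fixed (M : (R -> R) -> Prop) :
  is_ideal M -> is_proper M -> is_real_ideal M -> is_fixed M.
Proof.
  intros HM Hprop Hreal.
  pose proof HM as [HB [_ [Hadd Hmul]]].
  destruct (Hreal (fun x => x) (Baire1_continuous _ (derivable_continuous _ derivable_id))) as [r Hr].
  exists r; intros g Mg; change (g r = 0).
  destruct (Req_dec (g r) 0) as [E|E]; [exact E|exfalso].
  apply (ideal_nonvanishing_not_proper M (fun x => (x - r) * (x - r) + g x * g x));
    [exact HM| |intros x|exact Hprop].
  - apply Hadd; apply Hmul; auto.
  - destruct (Req_dec x r) as [->|Ex].
    + pose proof (Rsqr_pos_lt _ E); unfold Rsqr in *; nra.
    + assert (0 < (x - r) * (x - r)) by (apply Rsqr_pos_lt; lra).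
      pose proof (Rle_0_sqr (g x)); unfold Rsqr in *; lra.
Qed.

Theorem mainTheorem20 (M : (R -> R) -> Prop) (HM : is_maximal_ideal M) :
  (is_real_ideal M <-> is_fixed M) /\
  (is_fixed M <-> exists p : R, forall f, M f <-> (Baire1 f /\ f p = 0)).
Proof.
  assert (Hpoint : is_fixed M -> exists p, forall f, M f <-> point_ideal p f)
    by (intros [p Hp]; exists p; exact (maximal_ideal_fixed_at M p HM Hp)).
  destruct HM as [Hideal [Hprop _]].
  split; split.
  - exact (real_ideal_is_fixed M Hideal Hprop).
  - intros Hfix f Hf; destruct (Hpoint Hfix) as [p Hp].
    destruct (point_ideal_is_real p f Hf) as [r Hr].
    exists r; apply Hp, Hr.
  - exact Hpoint.
  - intros [p Hp]; exists p; intros f Hf; apply Hp, Hf.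
Qed.
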